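(* Let $q\in\mathbb{C}$, $|q|<1$. For each $\mathfrak{t}\in\{\widetilde{\mathrm{I}},\mathrm{II},\mathrm{III},\widetilde{\mathrm{IV}}\}$ and all $u,v\in\mathfrak{A}^0_{\mathfrak{t}}$, $$\mathfrak{z}_q[u*_{\mathfrak{t}}v]=\mathfrak{z}_q[u]\,\mathfrak{z}_q[v].$$
   Context: For integer tuples $\mathbf{t},\mathbf{s}$ of length $d$ put $\mathfrak{z}_q^{\mathbf{t}}[\mathbf{s}]=\sum_{k_1>\dots>k_d>0}\prod_{j=1}^d\frac{q^{k_jt_j}}{(1-q^{k_j})^{s_j}}$. All algebras are over $\mathbb{Q}$; $\mathbf{1}$ is the empty word. For a free algebra on a set of letters with a commutative bilinear product $[\cdot,\cdot]$ on the span of letters, the associated stuffle $*$ is the bilinear product with $\mathbf{1}*u=u*\mathbf{1}=u$ and $(\alpha u)*(\beta v)=\alpha(u*\beta v)+\beta(\alpha u*v)+[\alpha,\beta](u*v)$ ($\alpha,\beta$ letters, $u,v$ words). Type $\widetilde{\mathrm{I}}$: $\mathfrak{A}^1_{\widetilde{\mathrm{I}}}$ = free algebra on $\theta$, $z_k$ ($k\ge1$), $[z_k,z_l]=z_{k+l}+z_{k+l-1}$, $[\theta,z_k]=[z_k,\theta]=z_{k+1}$, $[\theta,\theta]=z_2-\theta$. $\mathfrak{A}^0_{\widetilde{\mathrm{I}}}=\mathbb{Q}\mathbf{1}+\theta\mathfrak{A}^1_{\widetilde{\mathrm{I}}}+\sum_{k\ge2}z_k\mathfrak{A}^1_{\widetilde{\mathrm{I}}}$.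 $\mathfrak{z}_q$ is $\mathbb{Q}$-linear with $\mathfrak{z}_q[\mathbf{1}]=1$ and $\mathfrak{z}_q[y_1\cdots y_d]=\sum_{k_1>\dots>k_d>0}\prod_jM_{k_j}(y_j)$, $M_k(\theta)=\frac{q^k}{1-q^k}$, $M_k(z_s)=\frac{q^{(s-1)k}}{(1-q^k)^s}$. Type II: $\mathfrak{A}^1_{\mathrm{II}}$ = free algebra on $z'_k$ ($k\ge0$), $[z'_k,z'_l]=z'_{k+l}$; $\mathfrak{A}^0_{\mathrm{II}}=\mathbb{Q}\mathbf{1}+\sum_{k\ge1}z'_k\mathfrak{A}^1_{\mathrm{II}}$; $\mathfrak{z}_q[\mathbf{1}]=1$, $\mathfrak{z}_q[z'_{s_1}\cdots z'_{s_d}]=\mathfrak{z}_q^{(s_1,\dots,s_d)}[s_1,\dots,s_d]$. Type III: $B$ = free algebra on $z_k$ ($k\in\mathbb{Z}$) with stuffle $*_B$ from $[z_k,z_l]=z_{k+l}$. $\mathfrak{A}^0_{\mathrm{III}}$ = $\mathbb{Q}$-span of symbols $z'_kw$ ($k\in\mathbb{Z}$, $w$ a word of $B$). $\sigma_-(z'_nw):=z_nw-z_{n-1}w$. $z'_ku*_{\mathrm{III}}z'_lv:=z'_k(u*_B\sigma_-(z'_lv))+z'_l(\sigma_-(z'_ku)*_Bv)+(z'_{k+l}-z'_{k+l-1})(u*_Bv)$, extended bilinearly. $\mathfrak{z}_q[z'_{s_1}z_{s_2}\cdots z_{s_d}]=\mathfrak{z}_q^{(1,0,\dots,0)}[s_1,\dots,s_d]$,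 extended linearly. Type $\widetilde{\mathrm{IV}}$: $C$ = free algebra on $z'_k$ ($k\ge0$) with stuffle $*_C$ from $[z'_k,z'_l]=z'_{k+l}$. $\mathfrak{A}^1_{\widetilde{\mathrm{IV}}}=\mathbb{Q}\mathbf{1}\oplus\theta C\oplus\bigoplus_{k\ge1}z_kC$, $\mathfrak{A}^0_{\widetilde{\mathrm{IV}}}=\mathbb{Q}\mathbf{1}\oplus\theta C\oplus\bigoplus_{k\ge2}z_kC$. $\sigma_+(z_nw):=z'_nw+z'_{n-1}w$. $*_{\widetilde{\mathrm{IV}}}$ is bilinear with unit $\mathbf{1}$ and for $k,l\ge1$, words $u,v\in C$: $z_ku*z_lv=z_k(u*_C\sigma_+(z_lv))+z_l(\sigma_+(z_ku)*_Cv)+(z_{k+l}+z_{k+l-1})(u*_Cv)$; $z_ku*\theta v=\theta v*z_ku=z_k(u*_Cz'_1v)+\theta(\sigma_+(z_ku)*_Cv)+z_{k+1}(u*_Cv)$; $\theta u*\theta v=\theta(u*_Cz'_1v)+\theta(z'_1u*_Cv)+(z_2-\theta)(u*_Cv)$. $\mathfrak{z}_q[\mathbf{1}]=1$, $\mathfrak{z}_q[\theta z'_{s_2}\cdots z'_{s_d}]=\mathfrak{z}_q^{(1,s_2,\dots,s_d)}[1,s_2,\dots,s_d]$, $\mathfrak{z}_q[z_{s_1}z'_{s_2}\cdots z'_{s_d}]=\mathfrak{z}_q^{(s_1-1,s_2,\dots,s_d)}[s_1,\dots,s_d]$, extended linearly. *)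

From HB Require Import structures.
From mathcomp Require Import all_boot all_order all_algebra.
From mathcomp Require Import all_classical all_reals all_analysis.
From mathcomp Require Import complex.
Set Implicit Arguments. Unset Strict Implicit. Unset Printing Implicit Defensive.
Import Order.TTheory GRing.Theory Num.Theory numFieldNormedType.Exports.
Local Open Scope ring_scope.

(* Formal Q-linear combinations of "words" (elements of the free Q-vector    *)
(* space on a set W of basis words), represented as finite lists of          *)
(* (coefficient, basis word) pairs.                                          *)
Definition lc (W : Type) := seq (rat * W).

Definition lc_prod (W : Type) (mul : W -> W -> lc W) (u v : lc W) : lc W :=
  flatten (map (fun x : rat * W =>
    flatten (map (fun y : rat * W =>
      map (fun rw : rat * W => (x.1 * y.1 * rw.1, rw.2)) (mul x.2 y.2)) v)) u).

Definition lc_eval (W : Type) (C : unitRingType) (f : W -> C) (u : lc W) : C :=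
  \sum_(p <- u) ratr p.1 * f p.2.

Definition lc_pre (A : Type) (c : rat) (a : A) (L : lc (seq A)) : lc (seq A) :=
  [seq (c * p.1, a :: p.2) | p <- L].

Fixpoint stuffle (A : Type) (br : A -> A -> lc A) (u : seq A) : seq A -> lc (seq A) :=
  match u with
  | [::] => fun v => [:: (1, v)]
  | a :: u' =>
      fix st2 (v : seq A) : lc (seq A) :=
        match v with
        | [::] => [:: (1, a :: u')]
        | b :: v' =>
            lc_pre 1 a (stuffle br u' v)
            ++ lc_pre 1 b (st2 v')
            ++ flatten [seq lc_pre cx.1 cx.2 (stuffle br u' v') | cx <- br a b]
        end
  end.

Definition lc_stuffle (A : Type) (br : A -> A -> lc A) (u v : lc (seq A)) : lc (seq A) :=
  lc_prod (stuffle br) u v.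

Section QMZV.
Variable R : realType.
Local Notation C := (R[i]^o).

Definition qterm (q : C) (t s : int) (k : nat) : C :=
  (q ^+ k) ^ t / (1 - q ^+ k) ^ s.

Fixpoint msum (q : C) (ts : seq (int * int)) (N : nat) : C :=
  match ts with
  | [::] => 1
  | p :: ts' => \sum_(1 <= k < N.+1) qterm q p.1 p.2 k * msum q ts' k.-1
  end.

Definition zqts (q : C) (ts : seq (int * int)) : C := limn (msum q ts).

End QMZV.

Inductive letI := ThetaI | ZI of nat.

Definition brI (a b : letI) : lc letI :=
  match a, b with
  | ZI k, ZI l => [:: (1, ZI (k + l)); (1, ZI (k + l - 1))]
  | ThetaI, ZI k => [:: (1, ZI k.+1)]
  | ZI k, ThetaI => [:: (1, ZI k.+1)]
  | ThetaI, ThetaI => [:: (1, ZI 2); (-1, ThetaI)]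
  end.

Definition letterA1I (a : letI) : bool :=
  match a with ThetaI => true | ZI k => 1 <= k end%N.

Definition wordA0I (w : seq letI) : bool :=
  all letterA1I w &&
  match w with
  | [::] => true
  | ThetaI :: _ => true
  | ZI k :: _ => (2 <= k)%N
  end.

Definition tsI (a : letI) : int * int :=
  match a with ThetaI => (1, 1) | ZI s => (Posz s - 1, Posz s) end.

Definition zqI (R : realType) (q : R[i]^o) (u : lc (seq letI)) : R[i]^o :=
  lc_eval (fun w => zqts q (map tsI w)) u.

(* Type II : letters z'_k (k >= 0), encoded by k : nat                      *)
Definition brII (k l : nat) : lc nat := [:: (1, (k + l)%N)].

Definition wordA0II (w : seq nat) : bool :=
  match w with [::] => true | k :: _ => (1 <= k)%N end.

Definition zqII (R : realType) (q : R[i]^o) (u : lc (seq nat)) : R[i]^o :=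
  lc_eval (fun w => zqts q [seq (Posz s, Posz s) | s <- w]) u.

(* Type III : B = free algebra on z_k (k in Z), word = seq int;              *)
(* A^0_III = span of symbols z'_k w, encoded as pairs (k, w).               *)
Definition brB (k l : int) : lc int := [:: (1, k + l)].

Definition stB (u v : seq int) : lc (seq int) := stuffle brB u v.

Definition sigma_minus (n : int) (w : seq int) : lc (seq int) :=
  [:: (1, n :: w); (-1, (n - 1) :: w)].

Definition lc_preIII (k : int) (L : lc (seq int)) : lc (int * seq int) :=
  [seq (p.1, (k, p.2)) | p <- L].

Definition prodIII (x y : int * seq int) : lc (int * seq int) :=
  let: (k, u) := x in let: (l, v) := y in
  lc_preIII k (lc_prod stB [:: (1, u)] (sigma_minus l v))
  ++ lc_preIII l (lc_prod stB (sigma_minus k u) [:: (1, v)])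
  ++ lc_preIII (k + l) (stB u v)
  ++ [seq (- p.1, (k + l - 1, p.2)) | p <- stB u v].

Definition lc_prodIII (u v : lc (int * seq int)) : lc (int * seq int) :=
  lc_prod prodIII u v.

Definition zqIII (R : realType) (q : R[i]^o) (u : lc (int * seq int)) : R[i]^o :=
  lc_eval (fun x => zqts q ((1, x.1) :: [seq (0, s) | s <- x.2])) u.

(* Type IV~ : C = free algebra on z'_k (k >= 0), words seq nat;              *)
(* basis words of A^1_IV~ : 1 (None), theta w, z_k w (k >= 1), w in C.       *)
Inductive headIV := ThetaIV | ZIV of nat.
Definition wordIV := option (headIV * seq nat).

Definition brC (k l : nat) : lc nat := [:: (1, (k + l)%N)].
Definition stC (u v : seq nat) : lc (seq nat) := stuffle brC u v.

Definition sigma_plus (n : nat) (w : seq nat) : lc (seq nat) :=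
  [:: (1, n :: w); (1, n.-1 :: w)].

Definition lc_preIV (c : rat) (h : headIV) (L : lc (seq nat)) : lc wordIV :=
  [seq (c * p.1, Some (h, p.2)) | p <- L].

Definition prodIV (x y : wordIV) : lc wordIV :=
  match x, y with
  | None, _ => [:: (1, y)]
  | _, None => [:: (1, x)]
  | Some (ZIV k, u), Some (ZIV l, v) =>
      lc_preIV 1 (ZIV k) (lc_prod stC [:: (1, u)] (sigma_plus l v))
      ++ lc_preIV 1 (ZIV l) (lc_prod stC (sigma_plus k u) [:: (1, v)])
      ++ lc_preIV 1 (ZIV (k + l)) (stC u v)
      ++ lc_preIV 1 (ZIV (k + l - 1)) (stC u v)
  | Some (ZIV k, u), Some (ThetaIV, v)
  | Some (ThetaIV, v), Some (ZIV k, u) =>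
      lc_preIV 1 (ZIV k) (stC u (1%N :: v))
      ++ lc_preIV 1 ThetaIV (lc_prod stC (sigma_plus k u) [:: (1, v)])
      ++ lc_preIV 1 (ZIV k.+1) (stC u v)
  | Some (ThetaIV, u), Some (ThetaIV, v) =>
      lc_preIV 1 ThetaIV (stC u (1%N :: v))
      ++ lc_preIV 1 ThetaIV (stC (1%N :: u) v)
      ++ lc_preIV 1 (ZIV 2) (stC u v)
      ++ lc_preIV (-1) ThetaIV (stC u v)
  end.

Definition lc_prodIV (u v : lc wordIV) : lc wordIV := lc_prod prodIV u v.

Definition wordA0IV (x : wordIV) : bool :=
  match x with
  | None => true
  | Some (ThetaIV, _) => true
  | Some (ZIV k, _) => (2 <= k)%N
  end.

Definition zqIV (R : realType) (q : R[i]^o) (u : lc wordIV) : R[i]^o :=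
  lc_eval (fun x => match x with
    | None => 1
    | Some (ThetaIV, w) => zqts q ((1, 1) :: [seq (Posz s, Posz s) | s <- w])
    | Some (ZIV s1, w) =>
        zqts q ((Posz s1 - 1, Posz s1) :: [seq (Posz s, Posz s) | s <- w])
    end) u.

(* Each identity already holds for the truncated sums
   [msum q ts N] over N >= k_1 > ... > k_d > 0, by induction on N.  Removing
   the largest index k_1 = N + 1 from a product of two truncated sums leaves
   three terms: the first word leads, the second word leads, or both lead
   with the same index, in which case the product of the two summands is
   expanded by the bracket.  This is exactly the recursion of the stuffle
   products, and the modified products of types III and IV~ are handled the
   same way after [sigma_-] / [sigma_+].  For every type the bracket is a
   partial-fraction identity for x^t / (1 - x)^s at x = q^k, each of them a
   consequence of
     x^t/(1-x)^s = x^t/(1-x)^(s-1) + x^(t+1)/(1-x)^s.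
   For |q| < 1 the series with t_1 >= 1 and t_j >= 0 converge, being
   dominated by a geometric series, so the truncated identities pass to the
   limit. *)

From Pilot Require Import Defs.
From HB Require Import structures.
From mathcomp Require Import all_boot all_order all_algebra.
From mathcomp Require Import all_classical all_reals all_analysis.
From mathcomp Require Import complex.
From mathcomp Require Import ring lra zify.
Import Order.TTheory GRing.Theory Num.Theory numFieldNormedType.Exports.
Local Open Scope ring_scope.
(* [msum] alone would refer to the sum of measures of MathComp-Analysis. *)
Local Notation msum := Defs.msum.

Section LinearCombinations.
Context {F : numFieldType}.

Lemma lc_eval_nil {W} (f : W -> F) : lc_eval f [::] = 0.
Proof. exact: big_nil. Qed.

Lemma lc_eval_cons {W} (f : W -> F) p (L : lc W) :
  lc_eval f (p :: L) = ratr p.1 * f p.2 + lc_eval f L.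
Proof. exact: big_cons. Qed.

Lemma lc_eval1 {W} (f : W -> F) w : lc_eval f [:: (1, w)] = f w.
Proof. by rewrite lc_eval_cons lc_eval_nil addr0 rmorph1 mul1r. Qed.

Lemma lc_eval_cat {W} (f : W -> F) (L1 L2 : lc W) :
  lc_eval f (L1 ++ L2) = lc_eval f L1 + lc_eval f L2.
Proof. exact: big_cat. Qed.

Lemma lc_eval_flatten {W} (f : W -> F) (LL : seq (lc W)) :
  lc_eval f (flatten LL) = \sum_(L <- LL) lc_eval f L.
Proof.
elim: LL => [|L LL IH]; first by rewrite lc_eval_nil big_nil.
by rewrite /= lc_eval_cat IH big_cons.
Qed.

Lemma eq_lc_eval {W} (f g : W -> F) L : f =1 g -> lc_eval f L = lc_eval g L.
Proof. by move=> fg; apply: eq_bigr => p _; rewrite fg. Qed.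

Lemma lc_evalD {W} (f g : W -> F) L :
  lc_eval (fun w => f w + g w) L = lc_eval f L + lc_eval g L.
Proof. by rewrite -big_split; apply: eq_bigr => p _; rewrite mulrDr. Qed.

Lemma lc_eval0 {W} (L : lc W) : lc_eval (fun _ => 0 : F) L = 0.
Proof. by rewrite /lc_eval big1 // => p _; rewrite mulr0. Qed.

Lemma lc_evalZ {W} (k : F) (f : W -> F) L :
  lc_eval (fun w => k * f w) L = k * lc_eval f L.
Proof. by rewrite /lc_eval mulr_sumr; apply: eq_bigr => p _; rewrite mulrCA. Qed.

Lemma lc_eval_relabel {W W'} (f : W' -> F) (phi : W -> W') (L : lc W) :
  lc_eval f [seq (p.1, phi p.2) | p <- L] = lc_eval (f \o phi) L.
Proof. exact: big_map. Qed.

Lemma lc_eval_relabelN {W W'} (f : W' -> F) (phi : W -> W') (L : lc W) :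
  lc_eval f [seq (- p.1, phi p.2) | p <- L] = - lc_eval (f \o phi) L.
Proof.
by rewrite /lc_eval big_map -sumrN; apply: eq_bigr => p _; rewrite rmorphN mulNr.
Qed.

Lemma lc_eval_relabelZ {W W'} (f : W' -> F) (c : rat) (phi : W -> W') (L : lc W) :
  lc_eval f [seq (c * p.1, phi p.2) | p <- L] = ratr c * lc_eval (f \o phi) L.
Proof.
by rewrite /lc_eval big_map mulr_sumr; apply: eq_bigr => p _; rewrite rmorphM mulrA.
Qed.

Lemma lc_eval_prod {W} (f : W -> F) mul (u v : lc W) :
  lc_eval f (lc_prod mul u v) =
  \sum_(x <- u) \sum_(y <- v) ratr x.1 * ratr y.1 * lc_eval f (mul x.2 y.2).
Proof.
rewrite lc_eval_flatten big_map; apply: eq_bigr => x _.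
rewrite lc_eval_flatten big_map; apply: eq_bigr => y _.
by rewrite /lc_eval big_map mulr_sumr; apply: eq_bigr => p _; rewrite !rmorphM !mulrA.
Qed.

Lemma lc_eval_prod_mul {W} {f : W -> F} {mul} {P1 P2 : pred W} {u v : lc W} :
  (forall x y, P1 x -> P2 y -> lc_eval f (mul x y) = f x * f y) ->
  all (fun p => P1 p.2) u -> all (fun p => P2 p.2) v ->
  lc_eval f (lc_prod mul u v) = lc_eval f u * lc_eval f v.
Proof.
move=> fmul; rewrite lc_eval_prod.
elim: u => [|x u IHu] /=; first by rewrite big_nil lc_eval_nil mul0r.
move=> /andP[Px Pu] Pv; rewrite big_cons lc_eval_cons mulrDl IHu //; congr (_ + _); clear IHu.
elim: v Pv => [|y v IHv] /=; first by rewrite big_nil lc_eval_nil mulr0.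
move=> /andP[Py Pv]; rewrite big_cons lc_eval_cons mulrDr IHv // fmul //.
by rewrite mulrACA.
Qed.

End LinearCombinations.

Lemma all_flatten T (a : pred T) (s : seq (seq T)) : all a (flatten s) = all (all a) s.
Proof. by elim: s => //= x s IH; rewrite all_cat IH. Qed.

Lemma all_lc_prod {W} {mul} {P1 P2 P : pred W} {u v : lc W} :
  (forall x y, P1 x -> P2 y -> all (fun p => P p.2) (mul x y)) ->
  all (fun p => P1 p.2) u -> all (fun p => P2 p.2) v ->
  all (fun p => P p.2) (lc_prod mul u v).
Proof.
move=> Pmul Pu Pv; rewrite all_flatten all_map.
apply: sub_all Pu => x /= Px; rewrite all_flatten all_map.
apply: sub_all Pv => y /= Py; rewrite all_map.
exact: sub_all (Pmul _ _ Px Py).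
Qed.

Lemma stuffle_cons A (br : A -> A -> lc A) a u b v :
  stuffle br (a :: u) (b :: v) =
  lc_pre 1 a (stuffle br u (b :: v)) ++ lc_pre 1 b (stuffle br (a :: u) v)
  ++ flatten [seq lc_pre cx.1 cx.2 (stuffle br u v) | cx <- br a b].
Proof. by []. Qed.

Section StuffleClosure.
Context {A : Type} {br : A -> A -> lc A}.

Lemma all_lc_pre (Q P : pred (seq A)) c a (L : lc (seq A)) :
  (forall w, Q w -> P (a :: w)) -> all (fun p => Q p.2) L ->
  all (fun p => P p.2) (lc_pre c a L).
Proof. by move=> QP QL; rewrite all_map; apply: sub_all QL => p /= /QP. Qed.

Lemma all_stuffle_letters {P : pred A} {u v : seq A} :
  (forall a b, P a -> P b -> all (fun cx => P cx.2) (br a b)) ->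
  all P u -> all P v -> all (fun p => all P p.2) (stuffle br u v).
Proof.
move=> Pbr; elim: u v => [|a u IHu] v Pu Pv; first by rewrite /= Pv.
elim: v Pv => [|b v IHv] Pbv; first by rewrite /= andbT.
case/andP: (Pu) => Pa {}Pu; case/andP: (Pbv) => Pb Pv.
rewrite stuffle_cons !all_cat; apply/and3P; split.
- by apply: all_lc_pre (IHu _ Pu Pbv) => w /= ->; rewrite Pa.
- by apply: all_lc_pre (IHv Pv) => w /= ->; rewrite Pb.
- rewrite all_flatten all_map; apply: sub_all (Pbr _ _ Pa Pb) => cx /= Pc.
  by apply: all_lc_pre (IHu _ Pu Pv) => w /= ->; rewrite Pc.
Qed.

Definition head_in (H : pred A) (w : seq A) := if w is a :: _ then H a else true.

Lemma all_stuffle_head {H : pred A} {u v : seq A} :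
  (forall a b, H a -> H b -> all (fun cx => H cx.2) (br a b)) ->
  head_in H u -> head_in H v -> all (fun p => head_in H p.2) (stuffle br u v).
Proof.
case: u v => [|a u] [|b v] Hbr //= Ha Hb; rewrite ?andbT // !all_cat.
have all_pre c x L : H x -> all (fun p => head_in H p.2) (lc_pre c x L).
  by move=> Hx; apply: (@all_lc_pre predT) => //; exact: all_predT.
rewrite !all_pre //= all_flatten all_map.
by apply: sub_all (Hbr _ _ Ha Hb) => cx /= /all_pre.
Qed.

End StuffleClosure.

Lemma eq_mul_of_recursion (K : comPzRingType) (al be Yu Yv Zx Zy E : nat -> K) :
  Zx 0 = 0 -> (forall N, Zx N.+1 = Zx N + al N.+1 * Yu N) ->
  Zy 0 = 0 -> (forall N, Zy N.+1 = Zy N + be N.+1 * Yv N) ->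
  E 0 = 0 ->
  (forall N, E N.+1 = E N + al N.+1 * (Yu N * Zy N) + be N.+1 * (Zx N * Yv N)
                      + al N.+1 * be N.+1 * (Yu N * Yv N)) ->
  forall N, E N = Zx N * Zy N.
Proof.
move=> Zx0 ZxS Zy0 ZyS E0 ES; elim=> [|N IH]; first by rewrite E0 Zx0 mul0r.
by rewrite ES IH ZxS ZyS; ring.
Qed.

Section TruncatedSums.
Variables (R : realType) (q : R[i]^o).

Lemma msumS p ts N :
  msum q (p :: ts) N.+1 = msum q (p :: ts) N + qterm q p.1 p.2 N.+1 * msum q ts N.
Proof. exact: big_nat_recr. Qed.

Lemma msum0 p ts : msum q (p :: ts) 0 = 0.
Proof. exact: big_geq. Qed.

Lemma lc_eval_msum_consS W (F : W -> seq (int * int)) h N (L : lc W) :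
  lc_eval (fun w => msum q (h :: F w) N.+1) L =
  lc_eval (fun w => msum q (h :: F w) N) L +
  qterm q h.1 h.2 N.+1 * lc_eval (fun w => msum q (F w) N) L.
Proof. by rewrite -lc_evalZ -lc_evalD; apply: eq_lc_eval => w; exact: msumS. Qed.

Lemma lc_eval_msum_cons0 W (F : W -> seq (int * int)) h (L : lc W) :
  lc_eval (fun w => msum q (h :: F w) 0) L = 0.
Proof.
by rewrite -(lc_eval0 L); apply: eq_lc_eval => w; exact: msum0.
Qed.

Lemma msum_lincomb (a b : R[i]^o) p1 p2 p ts :
  (forall k, (0 < k)%N ->
     a * qterm q p1.1 p1.2 k + b * qterm q p2.1 p2.2 k = qterm q p.1 p.2 k) ->
  forall N, a * msum q (p1 :: ts) N + b * msum q (p2 :: ts) N = msum q (p :: ts) N.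
Proof.
move=> comb; elim=> [|N IH]; first by rewrite !msum0 !mulr0 addr0.
by rewrite !msumS -IH -(comb N.+1) //; ring.
Qed.

Section Stuffle.
Variables (A : Type) (br : A -> A -> lc A) (g : A -> int * int) (P : pred A).
Local Notation f a k := (qterm q (g a).1 (g a).2 k).
Local Notation E N u v := (lc_eval (fun w => msum q (map g w) N) (stuffle br u v)).
Hypothesis br_qterm : forall a b k, (0 < k)%N -> P a -> P b ->
  f a k * f b k = lc_eval (fun c => f c k) (br a b).

Lemma lc_eval_pre_msum N c a (L : lc (seq A)) :
  lc_eval (fun w => msum q (map g w) N) (lc_pre c a L) =
  ratr c * lc_eval (fun w => msum q (g a :: map g w) N) L.
Proof.
exact: (@lc_eval_relabelZ _ _ _ _ c (cons a)).
Qed.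

Lemma lc_eval_flatten_pre N (M : lc A) (L : lc (seq A)) :
  lc_eval (fun w => msum q (map g w) N) (flatten [seq lc_pre cx.1 cx.2 L | cx <- M]) =
  lc_eval (fun c => lc_eval (fun w => msum q (g c :: map g w) N) L) M.
Proof. by rewrite lc_eval_flatten big_map; apply: eq_bigr => cx _; exact: lc_eval_pre_msum. Qed.

Lemma lc_eval_flatten_pre0 (M : lc A) (L : lc (seq A)) :
  lc_eval (fun w => msum q (map g w) 0) (flatten [seq lc_pre cx.1 cx.2 L | cx <- M]) = 0.
Proof.
rewrite lc_eval_flatten_pre -(lc_eval0 M).
by apply: eq_lc_eval => c; exact: lc_eval_msum_cons0.
Qed.

Lemma lc_eval_flatten_preS N (M : lc A) (L : lc (seq A)) :
  lc_eval (fun w => msum q (map g w) N.+1) (flatten [seq lc_pre cx.1 cx.2 L | cx <- M]) =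
  lc_eval (fun w => msum q (map g w) N) (flatten [seq lc_pre cx.1 cx.2 L | cx <- M]) +
  lc_eval (fun c => f c N.+1) M * lc_eval (fun w => msum q (map g w) N) L.
Proof.
rewrite !lc_eval_flatten_pre mulrC -lc_evalZ -lc_evalD.
by apply: eq_lc_eval => c; rewrite lc_eval_msum_consS mulrC.
Qed.

Lemma stuffle_msum0 a u b v : E 0 (a :: u) (b :: v) = 0.
Proof.
rewrite stuffle_cons !lc_eval_cat lc_eval_flatten_pre0 !lc_eval_pre_msum.
by rewrite !lc_eval_msum_cons0 !mulr0 !addr0.
Qed.

Lemma stuffle_msumS N a u b v : P a -> P b ->
  E N.+1 (a :: u) (b :: v) = E N (a :: u) (b :: v) + f a N.+1 * E N u (b :: v)
    + f b N.+1 * E N (a :: u) v + f a N.+1 * f b N.+1 * E N u v.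
Proof.
move=> Pa Pb; rewrite !stuffle_cons !lc_eval_cat lc_eval_flatten_preS !lc_eval_pre_msum.
by rewrite !lc_eval_msum_consS -br_qterm // rmorph1 !mul1r; ring.
Qed.

Lemma msum_stuffle N u v : all P u -> all P v ->
  lc_eval (fun w => msum q (map g w) N) (stuffle br u v) =
  msum q (map g u) N * msum q (map g v) N.
Proof.
elim: u v N => [|a u IHu] v N Pu Pv; first by rewrite lc_eval1 mul1r.
elim: v N Pv => [|b v IHv] N Pbv; first by rewrite lc_eval1 mulr1.
case/andP: (Pu) => Pa {}Pu; case/andP: (Pbv) => Pb Pv.
move: N; apply: (@eq_mul_of_recursion _ (fun k => f a k) (fun k => f b k)
  (msum q (map g u)) (msum q (map g v))).
- exact: msum0.
- by move=> N; exact: msumS.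
- exact: msum0.
- by move=> N; exact: msumS.
- exact: stuffle_msum0.
- by move=> N; rewrite stuffle_msumS // IHu // IHu // IHv //.
Qed.

End Stuffle.

Lemma msum_stuffle_total A (br : A -> A -> lc A) (g : A -> int * int) :
  (forall a b k, (0 < k)%N ->
     qterm q (g a).1 (g a).2 k * qterm q (g b).1 (g b).2 k =
     lc_eval (fun c => qterm q (g c).1 (g c).2 k) (br a b)) ->
  forall N u v, lc_eval (fun w => msum q (map g w) N) (stuffle br u v) =
                msum q (map g u) N * msum q (map g v) N.
Proof.
move=> br_qterm N u v.
by apply: (@msum_stuffle _ _ _ predT); rewrite ?all_predT // => a b k k_gt0 _ _; exact: br_qterm.
Qed.

End TruncatedSums.

Import ComplexField.Normc.
Local Notation Re := (@complex.Re _).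
Local Notation Im := (@complex.Im _).

Section ComplexNorm.
Context {R : realType}.
Local Open Scope complex_scope.
Implicit Types z : R[i].

Lemma normcE z : `|z| = (normc z)%:C.
Proof. by case: z. Qed.

Lemma normc_ge0 z : 0 <= normc z.
Proof. by case: z => a b; exact: sqrtr_ge0. Qed.

Lemma normcX z n : normc (z ^+ n) = normc z ^+ n.
Proof.
elim: n => [|n IH]; first by rewrite !expr0 normc1.
by rewrite !exprS normcM IH.
Qed.

Lemma normc_ge_Re z : `|Re z| <= normc z.
Proof.
case: z => a b /=.
by rewrite -sqrtr_sqr ler_sqrt ?addr_ge0 ?sqr_ge0 // lerDl sqr_ge0.
Qed.

Lemma normc_ge_Im z : `|Im z| <= normc z.
Proof.
case: z => a b /=.
by rewrite -sqrtr_sqr ler_sqrt ?addr_ge0 ?sqr_ge0 // lerDr sqr_ge0.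
Qed.

Lemma normc_le_ReIm z : normc z <= `|Re z| + `|Im z|.
Proof.
case: z => a b /=.
rewrite -[X in _ <= X]ger0_norm ?addr_ge0 // -sqrtr_sqr ler_sqrt ?sqr_ge0 //.
have ab_ge0 : 0 <= `|a| * `|b| := mulr_ge0 (normr_ge0 a) (normr_ge0 b).
by rewrite sqrrD !real_normK ?num_real //; nra.
Qed.

End ComplexNorm.

Lemma cvg_series_geometric_dom (R : realType) (c : nat -> R) K rho :
  0 <= K -> 0 <= rho < 1 -> (forall k, `|c k| <= K * rho ^+ k) -> cvgn (series c).
Proof.
move=> K_ge0 /andP[rho_ge0 rho_lt1] c_le; apply: normed_cvg.
apply: (@series_le_cvg _ _ (geometric K rho)) => //= n.
by rewrite mulr_ge0 // exprn_ge0.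
by apply: is_cvg_geometric_series; rewrite ger0_norm.
Qed.

Section ComplexLimits.
Variable R : realType.
Local Notation C := R[i]^o.
Local Open Scope classical_set_scope.
Local Open Scope complex_scope.

Lemma Re_sum (b : nat -> C) n :
  Re (\sum_(0 <= k < n) b k) = \sum_(0 <= k < n) Re (b k).
Proof.
elim: n => [|n IH]; first by rewrite !big_geq.
by rewrite !big_nat_recr //= -IH; case: (\sum_(0 <= k < n) b k) => x y; case: (b n).
Qed.

Lemma Im_sum (b : nat -> C) n :
  Im (\sum_(0 <= k < n) b k) = \sum_(0 <= k < n) Im (b k).
Proof.
elim: n => [|n IH]; first by rewrite !big_geq.
by rewrite !big_nat_recr //= -IH; case: (\sum_(0 <= k < n) b k) => x y; case: (b n).
Qed.

Lemma cvg_ReIm (f : nat -> C) :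
  cvgn (Re \o f) -> cvgn (Im \o f) -> cvgn f.
Proof.
move=> cvg_Re cvg_Im; apply/cvg_ex.
exists ((limn (Re \o f)) +i* (limn (Im \o f)) : C).
apply/cvgrPdist_lt => e e_gt0.
have [e_real Re_e_gt0] : e = (Re e)%:C /\ 0 < Re e.
  by case: e e_gt0 => a b; rewrite ltcE /= => /andP[/eqP -> a_gt0].
have e2_gt0 : 0 < Re e / 2 by rewrite divr_gt0.
have Ha : \forall n \near \oo, `|limn (Re \o f) - Re (f n)| < Re e / 2.
  by move/cvgrPdist_lt : cvg_Re; apply.
have Hb : \forall n \near \oo, `|limn (Im \o f) - Im (f n)| < Re e / 2.
  by move/cvgrPdist_lt : cvg_Im; apply.
apply: (filterS2 _ _ Ha Hb) => n; case: (f n) => x y /= Hx Hy.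
rewrite [X in _ < X]e_real normcE ltcR.
by apply: le_lt_trans (normc_le_ReIm _) _ => /=; lra.
Qed.

Lemma cvg_series_normc_dom (b : nat -> C) K rho :
  0 <= K -> 0 <= rho < 1 -> (forall k, normc (b k) <= K * rho ^+ k) -> cvgn (series b).
Proof.
move=> K_ge0 rho01 b_le; apply: cvg_ReIm.
- rewrite (_ : _ \o _ = series (Re \o b)); last by apply: funext => n; exact: Re_sum.
  apply: cvg_series_geometric_dom K_ge0 rho01 _ => k.
  exact: le_trans (normc_ge_Re _) (b_le k).
- rewrite (_ : _ \o _ = series (Im \o b)); last by apply: funext => n; exact: Im_sum.
  apply: cvg_series_geometric_dom K_ge0 rho01 _ => k.
  exact: le_trans (normc_ge_Im _) (b_le k).
Qed.

End ComplexLimits.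

Definition admissible (ts : seq (int * int)) :=
  if ts is p :: ts' then (0 < p.1) && all (fun p => 0 <= p.1) ts' else true.

Section Convergence.
Context {R : realType} {q : R[i]^o} (hq : `|q| < 1).
Local Notation r := (normc q).

Lemma normc_q_lt1 : r < 1.
Proof. by move: hq; rewrite normcE ltcE /= => /andP[]. Qed.

Lemma normc_qX_le k : (0 < k)%N -> r ^+ k <= r.
Proof.
case: k => // k _; rewrite exprS ler_piMr ?normc_ge0 //.
by rewrite exprn_ile1 ?normc_ge0 // ltW // normc_q_lt1.
Qed.

Lemma normc_1_subX_ge k : (0 < k)%N -> 1 - r <= normc (1 - q ^+ k).
Proof.
move=> k_gt0; have := normc_qX_le k k_gt0.
have := le_normcD (1 - q ^+ k) (q ^+ k).
by rewrite subrK normc1 normcX; lra.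
Qed.

Lemma normc_1_subX_le k : normc (1 - q ^+ k) <= 2.
Proof.
apply: le_trans (le_normcD _ _) _.
rewrite normcN normc1 normcX.
have := normc_q_lt1; have := normc_ge0 q => r_ge0 r_lt1.
by rewrite lerD2l exprn_ile1 // ltW.
Qed.

Lemma normc_1_subX_gt0 k : (0 < k)%N -> 0 < normc (1 - q ^+ k).
Proof. by move=> k_gt0; have := normc_1_subX_ge k k_gt0; have := normc_q_lt1; lra. Qed.

Lemma one_subX_neq0 k : (0 < k)%N -> 1 - q ^+ k != 0.
Proof.
move=> k_gt0; apply: contraTneq (normc_1_subX_gt0 k k_gt0) => ->.
by rewrite normc0 ltxx.
Qed.

Lemma normc_inv_1_subX_bounded (s : int) : exists2 M, 0 <= M &
  forall k, (0 < k)%N -> normc ((1 - q ^+ k) ^ s)^-1 <= M.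
Proof.
have r_lt1 := normc_q_lt1.
case: s => n.
- exists ((1 - r) ^+ n)^-1; first by rewrite invr_ge0 exprn_ge0 // subr_ge0 ltW.
  move=> k k_gt0; rewrite normcV normcX.
  rewrite lef_pV2 ?posrE ?exprn_gt0 ?subr_gt0 ?normc_1_subX_gt0 //.
  by rewrite lerXn2r ?nnegrE ?normc_ge0 ?normc_1_subX_ge // subr_ge0 ltW.
- exists (2 ^+ n.+1) => // k _; rewrite invrK normcX.
  by rewrite lerXn2r ?nnegrE ?normc_ge0 ?normc_1_subX_le.
Qed.

Lemma qterm_bounded (t s : int) : 0 <= t -> exists2 M, 0 <= M &
  forall k, (0 < k)%N -> normc (qterm q t s k) <= M.
Proof.
case: t => // n _; have [M M_ge0 HM] := normc_inv_1_subX_bounded s.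
exists M => // k k_gt0; rewrite normcM !normcX -exprM -[M]mul1r.
by rewrite ler_pM ?exprn_ge0 ?normc_ge0 ?HM // exprn_ile1 ?normc_ge0 ?ltW ?normc_q_lt1.
Qed.

Lemma qterm_geometric (t s : int) : 0 < t -> exists2 M, 0 <= M &
  forall k, (0 < k)%N -> normc (qterm q t s k) <= M * r ^+ k.
Proof.
case: t => // -[|n] // _; have [M M_ge0 HM] := normc_inv_1_subX_bounded s.
exists M => // k k_gt0; rewrite normcM !normcX -exprM mulrC.
rewrite ler_pM ?exprn_ge0 ?normc_ge0 ?HM //.
by apply: ler_wiXn2l; rewrite ?normc_ge0 ?(ltW normc_q_lt1) ?leq_pmulr.
Qed.

Lemma msum_geometric_bound ts lam : all (fun p => 0 <= p.1) ts -> 1 < lam ->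
  exists2 B, 0 <= B & forall n, normc (msum q ts n) <= B * lam ^+ n.
Proof.
move=> + lam_gt1; elim: ts => [_|p ts IH /andP[p_ge0 /IH[B B_ge0 HB]]].
  by exists 1 => // n; rewrite normc1 mul1r exprn_ege1 // ltW.
have [M M_ge0 HM] := qterm_bounded _ p.2 p_ge0.
have lam1_gt0 : 0 < lam - 1 by rewrite subr_gt0.
exists (M * B / (lam - 1)); first by rewrite divr_ge0 ?mulr_ge0 // ltW.
have lam_ge0 : 0 <= lam by rewrite ltW // (lt_trans ltr01).
elim=> [|n IHn]; first by rewrite msum0 normc0 !mulr_ge0 ?exprn_ge0 ?invr_ge0 // ltW.
rewrite msumS; apply: le_trans (le_normcD _ _) _; rewrite normcM.
have term_le : normc (qterm q p.1 p.2 n.+1) * normc (msum q ts n) <= M * (B * lam ^+ n).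
  by rewrite ler_pM ?normc_ge0 ?HM.
apply: le_trans (lerD IHn term_le) _.
rewrite [leRHS](_ : _ = M * B / (lam - 1) * lam ^+ n + M * (B * lam ^+ n)) //.
by rewrite exprS; field; rewrite gt_eqF.
Qed.

Lemma msum_cvg ts : admissible ts -> cvgn (msum q ts).
Proof.
case: ts => [_|p ts /andP[p_gt0 ts_ge0]]; first exact: is_cvg_cst.
(* The inner sums grow at most like lam^N for any lam > 1; any lam < 1/r is
   then beaten by the decay r^k of the first summand. *)
pose lam := 2 / (1 + r).
have r_ge0 := normc_ge0 q; have r_lt1 := normc_q_lt1.
have [lam_gt1 r_lam_lt1] : 1 < lam /\ r * lam < 1.
  have lamE : lam * (1 + r) = 2 by rewrite mulfVK // gt_eqF // ltr_pwDl.
  by split; nra.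
have [M M_ge0 HM] := qterm_geometric _ p.2 p_gt0.
have [B B_ge0 HB] := msum_geometric_bound _ _ ts_ge0 lam_gt1.
rewrite (_ : msum q _ = series (fun k => qterm q p.1 p.2 k.+1 * msum q ts k)); last first.
  by apply: funext => N; rewrite /series /= big_add1.
apply: (@cvg_series_normc_dom _ _ (M * B) (r * lam)); first exact: mulr_ge0.
  by rewrite mulr_ge0 //=; nra.
move=> k; rewrite normcM exprMn.
apply: le_trans (ler_pM (normc_ge0 _) (normc_ge0 _) (HM k.+1 isT) (HB k)) _.
have lam_ge0 : 0 <= lam by rewrite ltW // (lt_trans ltr01).
rewrite [leLHS](_ : _ = M * B * (r ^+ k * lam ^+ k) * r); last by rewrite exprS; ring.
by rewrite ler_piMr ?mulr_ge0 ?exprn_ge0 // ltW.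
Qed.

End Convergence.

Section Limits.
Context {R : realType}.
Local Notation C := R[i]^o.
Local Open Scope classical_set_scope.

Lemma lc_eval_cvg {W} {S : W -> nat -> C} {P : pred W} {L : lc W} :
  (forall w, P w -> cvgn (S w)) -> all (fun p => P p.2) L ->
  (fun N => lc_eval (S^~ N) L) @ \oo --> lc_eval (fun w => limn (S w)) L.
Proof.
move=> cvgS; elim: L => [_|p L IH /andP[Pp PL]].
  rewrite lc_eval_nil (_ : (fun N => _) = cst 0); first exact: cvg_cst.
  by apply: funext => N; rewrite lc_eval_nil.
rewrite lc_eval_cons (_ : (fun N => _) = fun N => ratr p.1 * S p.2 N + lc_eval (S^~ N) L).
  by apply: cvgD (IH PL); apply: cvgM (cvg_cst _) (cvgS _ Pp).
by apply: funext => N; rewrite lc_eval_cons.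
Qed.

Lemma lc_eval_lim_prod_mul {W} {mul} (S : W -> nat -> C) (P : pred W) {u v : lc W} :
  (forall w, P w -> cvgn (S w)) ->
  (forall x y, P x -> P y -> all (fun p => P p.2) (mul x y)) ->
  (forall N x y, P x -> P y -> lc_eval (S^~ N) (mul x y) = S x N * S y N) ->
  all (fun p => P p.2) u -> all (fun p => P p.2) v ->
  lc_eval (fun w => limn (S w)) (lc_prod mul u v) =
  lc_eval (fun w => limn (S w)) u * lc_eval (fun w => limn (S w)) v.
Proof.
move=> cvgS Pmul Smul Pu Pv.
have prod_eq : (fun N => lc_eval (S^~ N) (lc_prod mul u v)) =
                (fun N => lc_eval (S^~ N) u * lc_eval (S^~ N) v).
  by apply: funext => N; exact: lc_eval_prod_mul (Smul N) Pu Pv.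
have := lc_eval_cvg cvgS (all_lc_prod Pmul Pu Pv); rewrite prod_eq => cvg_prod.
have cvg_uv : (fun N => lc_eval (S^~ N) u * lc_eval (S^~ N) v) @ \oo -->
    lc_eval (fun w => limn (S w)) u * lc_eval (fun w => limn (S w)) v.
  exact: cvgM (lc_eval_cvg cvgS Pu) (lc_eval_cvg cvgS Pv).
exact: (cvg_unique (@norm_hausdorff _ C) cvg_prod cvg_uv).
Qed.

End Limits.

Section FracIdentities.
Variables (F : fieldType) (x : F).
Hypothesis x_neq1 : 1 - x != 0.

Lemma mul_frac_exprz (t1 s1 t2 s2 : int) : 0 <= t1 -> 0 <= t2 ->
  x ^ t1 / (1 - x) ^ s1 * (x ^ t2 / (1 - x) ^ s2) = x ^ (t1 + t2) / (1 - x) ^ (s1 + s2).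
Proof. by move=> t1_ge0 t2_ge0; rewrite mulf_div exprzD_ss ?t1_ge0 ?t2_ge0 // expfzDr. Qed.

Lemma frac_exprz_split (t s : int) : 0 <= t ->
  x ^ t / (1 - x) ^ s = x ^ t / (1 - x) ^ (s - 1) + x ^ (t + 1) / (1 - x) ^ s.
Proof.
move=> t_ge0; rewrite [x ^ (t + 1)]exprzD_ss ?t_ge0 // expr1z.
have -> : (1 - x) ^ s = (1 - x) ^ (s - 1) * (1 - x).
  by rewrite -[in LHS](subrK 1 s) [in LHS]expfzDr // expr1z.
by field; rewrite x_neq1 expfz_neq0.
Qed.

End FracIdentities.

Section QtermIdentities.
Context {R : realType} {q : R[i]^o} (hq : `|q| < 1).

Lemma qterm_mul t1 s1 t2 s2 k : (0 < k)%N -> 0 <= t1 -> 0 <= t2 ->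
  qterm q t1 s1 k * qterm q t2 s2 k = qterm q (t1 + t2) (s1 + s2) k.
Proof.
by move=> /(one_subX_neq0 hq) D_neq0 t1_ge0 t2_ge0; rewrite /qterm mul_frac_exprz.
Qed.

Lemma qterm_split t s k : (0 < k)%N -> 0 <= t ->
  qterm q t s k = qterm q t (s - 1) k + qterm q (t + 1) s k.
Proof. by move=> /(one_subX_neq0 hq) D_neq0 t_ge0; rewrite /qterm -frac_exprz_split. Qed.

End QtermIdentities.

Definition headI (a : letI) : bool := if a is ZI k then (1 < k)%N else true.

Lemma wordA0IE w : wordA0I w = all letterA1I w && head_in headI w.
Proof. by case: w => [|[|k] w]. Qed.

Lemma brI_letterA1I a b : letterA1I a -> letterA1I b ->
  all (fun c => letterA1I c.2) (brI a b).
Proof. by case: a => [|k]; case: b => [|l] //=; lia. Qed.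

Lemma brI_headI a b : headI a -> headI b -> all (fun c => headI c.2) (brI a b).
Proof. by case: a => [|k]; case: b => [|l] //=; lia. Qed.

Lemma stuffleI_wordA0I u v : wordA0I u -> wordA0I v ->
  all (fun p => wordA0I p.2) (stuffle brI u v).
Proof.
rewrite !wordA0IE => /andP[Lu Hu] /andP[Lv Hv].
have := all_stuffle_letters brI_letterA1I Lu Lv.
have := all_stuffle_head brI_headI Hu Hv.
elim: (stuffle brI u v) => //= p s IH /andP[Hp Hs] /andP[Lp Ls].
by rewrite wordA0IE Lp Hp IH.
Qed.

Lemma wordA0I_admissible w : wordA0I w -> admissible (map tsI w).
Proof.
rewrite wordA0IE; case: w => [|a w] //= /andP[/andP[_ Lw] Ha].
apply/andP; split; first by case: a Ha => [|[|[|k]]].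
by rewrite all_map; apply: sub_all Lw => -[|[|k]].
Qed.

Section TypeI.
Context {R : realType} {q : R[i]^o} (hq : `|q| < 1).
Local Notation f a k := (qterm q (tsI a).1 (tsI a).2 k).

Lemma qterm_thetaI_sqr k : (0 < k)%N -> f ThetaI k * f ThetaI k = f (ZI 2) k - f ThetaI k.
Proof. by move=> k_gt0; rewrite qterm_mul // [in RHS]qterm_split //= addrAC subrr add0r. Qed.

Lemma qterm_thetaI_ZI k n : (0 < k)%N -> (0 < n)%N ->
  f ThetaI k * f (ZI n) k = f (ZI n.+1) k.
Proof.
by case: n => // n k_gt0 _; rewrite qterm_mul ?subr_ge0 //=; congr (qterm q _ _ k); lia.
Qed.

Lemma qterm_ZI_ZI k m n : (0 < k)%N -> (0 < m)%N -> (0 < n)%N ->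
  f (ZI m) k * f (ZI n) k = f (ZI (m + n)) k + f (ZI (m + n - 1)) k.
Proof.
case: m n => [|m] [|n] // k_gt0 _ _.
rewrite qterm_mul ?subr_ge0 //= qterm_split // addrC.
by congr (qterm q _ _ k + qterm q _ _ k); lia.
Qed.

Lemma brI_qterm a b k : (0 < k)%N -> letterA1I a -> letterA1I b ->
  f a k * f b k = lc_eval (fun c => f c k) (brI a b).
Proof.
move=> k_gt0; case: a => [|m]; case: b => [|n] /= Ha Hb;
  rewrite !lc_eval_cons lc_eval_nil rmorph1 ?rmorphN1 !mul1r ?mulN1r addr0.
- exact: qterm_thetaI_sqr.
- exact: qterm_thetaI_ZI.
- by rewrite mulrC qterm_thetaI_ZI.
- exact: qterm_ZI_ZI.
Qed.

Lemma zqI_stuffle u v : all (fun p => wordA0I p.2) u -> all (fun p => wordA0I p.2) v ->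
  zqI q (lc_stuffle brI u v) = zqI q u * zqI q v.
Proof.
apply: (lc_eval_lim_prod_mul (fun w => msum q (map tsI w)) wordA0I).
- by move=> w /wordA0I_admissible; exact: msum_cvg.
- exact: stuffleI_wordA0I.
- move=> N x y; rewrite !wordA0IE => /andP[Lx _] /andP[Ly _].
  exact: msum_stuffle brI_qterm _ _ _ Lx Ly.
Qed.

End TypeI.

Lemma brII_head a b : (0 < a)%N -> (0 < b)%N -> all (fun c => (0 < c.2)%N) (brII a b).
Proof. by rewrite /= andbT; lia. Qed.

Lemma wordA0II_admissible w : wordA0II w -> admissible [seq (Posz s, Posz s) | s <- w].
Proof. by case: w => //= a w a_gt0; rewrite ltz_nat a_gt0 all_map; exact: all_predT. Qed.

Section TypeII.
Context {R : realType} {q : R[i]^o} (hq : `|q| < 1).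

Lemma brII_qterm (a b : nat) k : (0 < k)%N ->
  qterm q a a k * qterm q b b k =
  lc_eval (fun c => qterm q (Posz c) (Posz c) k) (brII a b).
Proof. by move=> k_gt0; rewrite lc_eval1 qterm_mul // -PoszD. Qed.

Lemma zqII_stuffle u v : all (fun p => wordA0II p.2) u -> all (fun p => wordA0II p.2) v ->
  zqII q (lc_stuffle brII u v) = zqII q u * zqII q v.
Proof.
apply: (lc_eval_lim_prod_mul (fun w => msum q [seq (Posz s, Posz s) | s <- w]) wordA0II).
- by move=> w /wordA0II_admissible; exact: msum_cvg.
- by move=> x y Hx Hy; exact: all_stuffle_head brII_head Hx Hy.
- by move=> N x y _ _; apply: msum_stuffle_total => a b; exact: brII_qterm.
Qed.

End TypeII.

Section TypeIII.
Context {R : realType} {q : R[i]^o} (hq : `|q| < 1).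
Local Notation gB := (fun s : int => (0 : int, s)).
Local Notation SB N := (fun w => msum q (map gB w) N).
Local Notation S N := (fun x : int * seq int => msum q ((1, x.1) :: map gB x.2) N).

Lemma brB_qterm a b k : (0 < k)%N ->
  qterm q 0 a k * qterm q 0 b k = lc_eval (fun c => qterm q 0 c k) (brB a b).
Proof. by move=> k_gt0; rewrite lc_eval1 qterm_mul. Qed.

Lemma msum_stB N u v : lc_eval (SB N) (stB u v) = msum q (map gB u) N * msum q (map gB v) N.
Proof. by apply: msum_stuffle_total => a b; exact: brB_qterm. Qed.

Lemma msum_lc_prod_stB N (L1 L2 : lc (seq int)) :
  lc_eval (SB N) (lc_prod stB L1 L2) = lc_eval (SB N) L1 * lc_eval (SB N) L2.
Proof.
apply: (lc_eval_prod_mul (P1 := predT) (P2 := predT)); rewrite ?all_predT //.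
by move=> *; exact: msum_stB.
Qed.

Lemma msum_sigma_minus N l v :
  lc_eval (SB N) (sigma_minus l v) = msum q ((1, l) :: map gB v) N.
Proof.
rewrite /sigma_minus !lc_eval_cons lc_eval_nil addr0 rmorph1 rmorphN1.
apply: msum_lincomb => k k_gt0.
by rewrite mul1r mulN1r [qterm q 0 l k](qterm_split hq) // addrAC subrr add0r.
Qed.

Lemma lc_eval_preIII N k (L : lc (seq int)) :
  lc_eval (S N) (lc_preIII k L) = lc_eval (fun w => msum q ((1, k) :: map gB w) N) L.
Proof. exact: (lc_eval_relabel _ (pair k)). Qed.

Lemma lc_eval_preIII_opp N k (L : lc (seq int)) :
  lc_eval (S N) [seq (- p.1, (k, p.2)) | p <- L] =
  - lc_eval (fun w => msum q ((1, k) :: map gB w) N) L.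
Proof. exact: (lc_eval_relabelN _ (pair k)). Qed.

Lemma prodIII_msum N x y : lc_eval (S N) (prodIII x y) = S N x * S N y.
Proof.
case: x y => k u [l v]; move: N.
apply: (@eq_mul_of_recursion _ (qterm q 1 k) (qterm q 1 l) (msum q (map gB u))
  (msum q (map gB v)) (msum q ((1, k) :: map gB u)) (msum q ((1, l) :: map gB v))
  (fun N => lc_eval (S N) (prodIII (k, u) (l, v)))).
- exact: msum0.
- by move=> N; exact: msumS.
- exact: msum0.
- by move=> N; exact: msumS.
- rewrite /prodIII !lc_eval_cat !lc_eval_preIII lc_eval_preIII_opp.
  by rewrite !lc_eval_msum_cons0 oppr0 !addr0.
move=> N; rewrite /prodIII !lc_eval_cat !lc_eval_preIII !lc_eval_preIII_opp !lc_eval_msum_consS.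
rewrite !msum_lc_prod_stB !lc_eval1 !msum_sigma_minus !msum_stB.
have -> : qterm q 1 (k + l) N.+1 =
          qterm q 1 (k + l - 1) N.+1 + qterm q 1 k N.+1 * qterm q 1 l N.+1.
  by rewrite qterm_mul // -qterm_split.
by cbn [fst snd]; ring.
Qed.

Lemma zqIII_prod u v : zqIII q (lc_prodIII u v) = zqIII q u * zqIII q v.
Proof.
apply: (lc_eval_lim_prod_mul (fun x => msum q ((1, x.1) :: map gB x.2)) predT);
  try by move=> *; exact: all_predT.
- by move=> [k w] _; apply: msum_cvg; elim: w => //= s w ->.
- by move=> N x y _ _; exact: prodIII_msum.
Qed.

End TypeIII.

(* [tsIV h] is [tsI] of the corresponding letter of type I~, so the bracket
   identities of type I~ serve type IV~ as well. *)
Definition tsIV (h : headIV) : int * int := if h is ZIV s then (Posz s - 1, Posz s) else (1, 1).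

Lemma prodIV_wordA0IV x y : wordA0IV x -> wordA0IV y ->
  all (fun p => wordA0IV p.2) (prodIV x y).
Proof.
have pre c h L : wordA0IV (Some (h, [::])) -> all (fun p => wordA0IV p.2) (lc_preIV c h L).
  by move=> Hh; rewrite all_map; apply/allP => p _ /=; case: h Hh.
case: x => [[[|k] u]|]; case: y => [[[|l] v]|] //= Hx Hy; rewrite ?andbT // !all_cat;
  by rewrite !pre //=; lia.
Qed.

Section TypeIV.
Context {R : realType} {q : R[i]^o} (hq : `|q| < 1).
Local Notation gC := (fun s : nat => (Posz s, Posz s)).
Local Notation SC N := (fun w => msum q (map gC w) N).
Local Notation S N := (fun x : wordIV =>
  if x is Some (h, w) then msum q (tsIV h :: map gC w) N else 1).
Local Notation f h k := (qterm q (tsIV h).1 (tsIV h).2 k).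

Lemma msum_stC N u v : lc_eval (SC N) (stC u v) = msum q (map gC u) N * msum q (map gC v) N.
Proof. by apply: msum_stuffle_total => a b; exact: brII_qterm. Qed.

Lemma msum_lc_prod_stC N (L1 L2 : lc (seq nat)) :
  lc_eval (SC N) (lc_prod stC L1 L2) = lc_eval (SC N) L1 * lc_eval (SC N) L2.
Proof.
apply: (lc_eval_prod_mul (P1 := predT) (P2 := predT)); rewrite ?all_predT //.
by move=> *; exact: msum_stC.
Qed.

Lemma msum_sigma_plus N k v : (0 < k)%N ->
  lc_eval (SC N) (sigma_plus k v) = msum q (tsIV (ZIV k) :: map gC v) N.
Proof.
case: k => // k _; rewrite /sigma_plus !lc_eval_cons lc_eval_nil addr0 rmorph1.
apply: msum_lincomb => m m_gt0; rewrite !mul1r /=.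
rewrite [in RHS](qterm_split hq) // addrC; congr (qterm q _ _ m + qterm q _ _ m); lia.
Qed.

Lemma lc_eval_preIV N c h (L : lc (seq nat)) :
  lc_eval (S N) (lc_preIV c h L) =
  ratr c * lc_eval (fun w => msum q (tsIV h :: map gC w) N) L.
Proof. exact: (lc_eval_relabelZ _ _ (fun w => Some (h, w))). Qed.

Lemma prodIV_msum N x y : wordA0IV x -> wordA0IV y ->
  lc_eval (S N) (prodIV x y) = S N x * S N y.
Proof.
case: x => [[h1 u]|] Hx Hy; last by rewrite lc_eval1 mul1r.
case: y Hy => [[h2 v]|] Hy; last by case: h1 {Hx} => [|k] /=; rewrite lc_eval1 mulr1.
move: N; apply: (@eq_mul_of_recursion _ (fun m => f h1 m) (fun m => f h2 m)
  (msum q (map gC u)) (msum q (map gC v)) (msum q (tsIV h1 :: map gC u))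
  (msum q (tsIV h2 :: map gC v))
  (fun N => lc_eval (S N) (prodIV (Some (h1, u)) (Some (h2, v))))).
- exact: msum0.
- by move=> N; exact: msumS.
- exact: msum0.
- by move=> N; exact: msumS.
- by case: h1 h2 {Hx Hy} => [|k] [|l];
    rewrite /prodIV !lc_eval_cat !lc_eval_preIV !lc_eval_msum_cons0 !mulr0 ?addr0.
have msum_theta w : msum q (map gC (1%N :: w)) = msum q (tsIV ThetaIV :: map gC w) by [].
move=> N; case: h1 h2 Hx Hy => [|k] [|l] Hx Hy;
  rewrite /prodIV !lc_eval_cat !lc_eval_preIV !lc_eval_msum_consS rmorph1 ?rmorphN1 !mul1r.
- rewrite !msum_stC !msum_theta.
  have -> : f (ZIV 2) N.+1 = f ThetaIV N.+1 * f ThetaIV N.+1 + f ThetaIV N.+1.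
    by rewrite (qterm_thetaI_sqr hq) // subrK.
  by ring.
- rewrite msum_lc_prod_stC lc_eval1 msum_sigma_plus ?(ltnW Hy) // !msum_stC !msum_theta.
  rewrite -(qterm_thetaI_ZI hq) ?(ltnW Hy) //.
  by ring.
- rewrite msum_lc_prod_stC lc_eval1 msum_sigma_plus ?(ltnW Hx) // !msum_stC !msum_theta.
  rewrite -(qterm_thetaI_ZI hq) ?(ltnW Hx) //.
  by ring.
- rewrite !msum_lc_prod_stC !lc_eval1 !msum_sigma_plus ?(ltnW Hx) ?(ltnW Hy) // !msum_stC.
  have -> : f (ZIV (k + l - 1)) N.+1 = f (ZIV k) N.+1 * f (ZIV l) N.+1 - f (ZIV (k + l)) N.+1.
    by rewrite (qterm_ZI_ZI hq) ?(ltnW Hx) ?(ltnW Hy) // addrC addKr.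
  by ring.
Qed.

Lemma zqIV_prod u v : all (fun p => wordA0IV p.2) u -> all (fun p => wordA0IV p.2) v ->
  zqIV q (lc_prodIV u v) = zqIV q u * zqIV q v.
Proof.
pose S x N := if x is Some (h, w) then msum q (tsIV h :: map gC w) N else 1.
have zqIVE L : zqIV q L = lc_eval (fun x => limn (S x)) L.
  by apply: eq_lc_eval => -[[[|k] w]|] //=; rewrite lim_cst.
rewrite !zqIVE; apply: (lc_eval_lim_prod_mul S wordA0IV).
- move=> [[h w]|] Hw; last exact: is_cvg_cst.
  apply: (msum_cvg hq); apply/andP; split; last by elim: w {Hw} => //= s w ->.
  by case: h Hw => //= k; rewrite subr_gt0 ltz_nat.
- exact: prodIV_wordA0IV.
- exact: prodIV_msum.
Qed.

End TypeIV.

Theorem theorem5p1 (R : realType) (q : R[i]^o) (hq : `|q| < 1) :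
  (forall u v : lc (seq letI),
     all (fun p => wordA0I p.2) u -> all (fun p => wordA0I p.2) v ->
     zqI q (lc_stuffle brI u v) = zqI q u * zqI q v)
  /\
  (forall u v : lc (seq nat),
     all (fun p => wordA0II p.2) u -> all (fun p => wordA0II p.2) v ->
     zqII q (lc_stuffle brII u v) = zqII q u * zqII q v)
  /\
  (forall u v : lc (int * seq int),
     zqIII q (lc_prodIII u v) = zqIII q u * zqIII q v)
  /\
  (forall u v : lc wordIV,
     all (fun p => wordA0IV p.2) u -> all (fun p => wordA0IV p.2) v ->
     zqIV q (lc_prodIV u v) = zqIV q u * zqIV q v).
Proof.
split; [exact: zqI_stuffle | split; [exact: zqII_stuffle | split]].
- exact: zqIII_prod.
- exact: zqIV_prod.
Qed.
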